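(* Let $a_2,a_3$ be integers with $1<a_2<a_3$, $A=\{1,a_2,a_3\}$, and let $SG(A,n,p)$ be a stride generator. Then there exists an integer $x$ with $a_3-a_2\le x<a_3$ which has no $n$-generation of order $<p$ (i.e. $x$ is covered only by threads of order $p$ among threads of order $\le p$).
   Context: For integers $n$ and $i\ge 0$, an integer $x$ has an $n$-generation of order $i$ if there are integers $c_1,c_2\ge 0$ with $x+ia_3=c_2a_2+c_1$ and $c_1+c_2\le n+i$. For integers $n$ and $p\ge0$, $SG(A,n,p)$ is a stride generator if: (A) every integer $0\le x<a_3$ has an $n$-generation of some order $\le p$; (B) at least one integer $0\le x<a_3$ has no $n$-generation of order $<p$; (C) at least one integer $0\le y<a_3$ has no $(n-1)$-generation of any order $\le p+1$. A thread of order $i$ is an integer interval $[ea_2-ia_3,\, ea_2-ia_3+(n+i)-e]$ with integers $e\ge0$, $n+i-e\ge0$; $x$ has an $n$-generation of order $i$ iff $x$ lies in some thread of order $i$. *)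

From Stdlib Require Export ZArith Lia.
Open Scope Z_scope.

Definition has_generation (a2 a3 n i x : Z) : Prop :=
  exists c1 c2 : Z, 0 <= c1 /\ 0 <= c2 /\
    x + i * a3 = c2 * a2 + c1 /\ c1 + c2 <= n + i.

Definition stride_generator (a2 a3 n p : Z) : Prop :=
  0 <= p /\
  (forall x, 0 <= x < a3 -> exists i, 0 <= i <= p /\ has_generation a2 a3 n i x) /\
  (exists x, 0 <= x < a3 /\ forall i, 0 <= i < p -> ~ has_generation a2 a3 n i x) /\
  (exists y, 0 <= y < a3 /\ forall i, 0 <= i <= p + 1 -> ~ has_generation a2 a3 (n - 1) i y).


(* Adding [a2] to a point never creates a generation: use one [a2]-stride less
   if there is one, otherwise pay with [a2] fewer unit steps. Hence an
   uncovered point in [0, a3) can be pushed into the top window [a3 - a2, a3). *)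

Lemma has_generation_sub_stride (a2 a3 n i x : Z) :
  0 <= a2 -> 0 <= a3 -> 0 <= i -> 0 <= x ->
  has_generation a2 a3 n i (x + a2) -> has_generation a2 a3 n i x.
Proof.
  intros Ha2 Ha3 Hi Hx [c1 [c2 [Hc1 [Hc2 [Hsum Hlen]]]]].
  destruct (Z.eq_dec c2 0) as [-> | Hc2_pos].
  - exists (c1 - a2), 0; nia.
  - exists c1, (c2 - 1); nia.
Qed.

Lemma has_generation_sub_strides (a2 a3 n i x k : Z) :
  0 <= a2 -> 0 <= a3 -> 0 <= i -> 0 <= x -> 0 <= k ->
  has_generation a2 a3 n i (x + k * a2) -> has_generation a2 a3 n i x.
Proof.
  intros Ha2 Ha3 Hi Hx Hk.
  pattern k; apply natlike_ind; [| | exact Hk]; clear k Hk.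
  - intros Hgen; now rewrite Z.add_0_r in Hgen.
  - intros k Hk IHk Hgen.
    apply IHk, has_generation_sub_stride; [nia .. |].
    now replace (x + k * a2 + a2) with (x + Z.succ k * a2) by ring.
Qed.

Theorem lemma2 (a2 a3 n p : Z) :
  1 < a2 -> a2 < a3 ->
  stride_generator a2 a3 n p ->
  exists x, a3 - a2 <= x < a3 /\
    forall i, 0 <= i < p -> ~ has_generation a2 a3 n i x.
Proof.
  intros Ha2 Ha3 [_ [_ [[x0 [Hx0 Huncovered]] _]]].
  (* [x0 + k * a2 = a3 - 1 - (a3 - 1 - x0) mod a2] lies in the top window. *)
  set (k := (a3 - 1 - x0) / a2).
  assert (Hdiv := Z.div_mod (a3 - 1 - x0) a2 ltac:(lia)).
  assert (Hmod := Z.mod_pos_bound (a3 - 1 - x0) a2 ltac:(lia)).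
  assert (Hk : 0 <= k) by (apply Z.div_pos; lia).
  exists (x0 + k * a2); split; [nia |].
  intros i Hi Hgen.
  apply (Huncovered i Hi).
  apply has_generation_sub_strides with (k := k); [lia .. | exact Hgen].
Qed.
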